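(* Let $G=(V,E)$ be a forest with $|V|=n$. For every integer $k\ge 0$ with $2k\le n$, the coefficient of $p_{(2^k,1^{n-2k})}$ in the expansion of $X_G$ in the power-sum basis equals $(-1)^k m_k$, where $m_k$ is the number of $k$-matchings of $G$. Consequently the matching polynomial of $G$ is $$\mu_G(x)=\sum_{k}\bigl|c_{(2^k,1^{n-2k})}\bigr|\,x^k,$$ where $c_\lambda$ denotes the coefficient of $p_\lambda$ in $X_G$; in particular $\mu_G$ is determined by $X_G$.
   Context: For a graph $G=(V,E)$ with $V=\{v_1,\dots,v_n\}$, a proper coloring is a map $\kappa:V\to\mathbb{N}$ with $\kappa(u)\ne\kappa(v)$ whenever $(u,v)\in E$. The chromatic symmetric function is $X_G=\sum_\kappa x_{\kappa(v_1)}\cdots x_{\kappa(v_n)}$, summed over proper colorings. $p_m=\sum_{i\ge1}x_i^m$ and $p_\lambda=p_{\lambda_1}\cdots p_{\lambda_\ell}$ for a partition $\lambda$; the $p_\lambda$ form a basis of symmetric functions. The notation $(2^k,1^{j})$ denotes the partition with $k$ parts equal to $2$ and $j$ parts equal to $1$. A $k$-matching of $G$ is a set of $k$ edges, no two sharing an endpoint; the matching polynomial is $\mu_G(x)=\sum_k m_k x^k$ with $m_k$ the number of $k$-matchings. *)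

From HB Require Import structures.
From mathcomp Require Import all_boot all_order all_algebra.
From mathcomp Require Import mpoly.
Set Implicit Arguments. Unset Strict Implicit. Unset Printing Implicit Defensive.
Import GRing.Theory Num.Theory.
Local Open Scope ring_scope.

(* A simple graph: T finite vertex set, e symmetric irreflexive adjacency. *)

Definition forest (T : finType) (e : rel T) : Prop :=
  forall (x : T) (p : seq T),
    (2 <= size p)%N -> uniq (x :: p) -> path e x p -> ~~ e (last x p) x.

Definition is_edge (T : finType) (e : rel T) (s : {set T}) : bool :=
  [exists x, exists y, e x y && (s == [set x; y])].

Definition is_matching (T : finType) (e : rel T) (M : {set {set T}}) : bool :=
  [forall s in M, is_edge e s] &&
  [forall s in M, forall t in M, (s != t) ==> [disjoint s & t]].

Definition nmatch (T : finType) (e : rel T) (k : nat) : nat :=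
  #|[set M : {set {set T}} | is_matching e M && (#|M| == k)]|.

Definition matching_poly (T : finType) (e : rel T) : {poly rat} :=
  \sum_(k < #|T|.+1) (nmatch e k)%:R *: 'X^k.

Definition proper_col (T : finType) (e : rel T) (N : nat)
  (kap : {ffun T -> 'I_N}) : bool :=
  [forall u, forall v, e u v ==> (kap u != kap v)].

Definition chromsym (T : finType) (e : rel T) (N : nat) : {mpoly rat[N]} :=
  \sum_(kap : {ffun T -> 'I_N} | proper_col e kap) \prod_(v : T) 'X_(kap v).

Definition psum (N i : nat) : {mpoly rat[N]} := \sum_(j < N) 'X_j ^+ i.

(* A partition of n is encoded by its multiplicity vector
   m : 'I_(n+1) -> 'I_(n+1), m i = number of parts equal to i. *)
Definition is_partn (n : nat) (m : {ffun 'I_n.+1 -> 'I_n.+1}) : bool :=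
  (m ord0 == 0 :> nat) && (\sum_(i < n.+1) i * m i == n)%N.

Definition plam (N n : nat) (m : {ffun 'I_n.+1 -> 'I_n.+1}) : {mpoly rat[N]} :=
  \prod_(i < n.+1) psum N i ^+ m i.

Definition lam21 (n k : nat) : {ffun 'I_n.+1 -> 'I_n.+1} :=
  [ffun i : 'I_n.+1 =>
     if (i == 1 :> nat) then inord (n - 2 * k)
     else if (i == 2 :> nat) then inord k else ord0].

Definition pexpansion (T : finType) (e : rel T) (N : nat)
  (c : {ffun 'I_#|T|.+1 -> 'I_#|T|.+1} -> rat) : Prop :=
  chromsym e N = \sum_(m | is_partn m) c m *: plam N m.

(* Inclusion-exclusion over the monochromatic edges of a colouring gives Stanley's
   expansion X_G = sum_(S subset E) (-1)^|S| p_lambda(S), where lambda(S) lists the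
   vertex counts of the connected components of the spanning subgraph (V, S).  In a
   simple graph a two-vertex component is a single edge, so lambda(S) = (2^k, 1^(n-2k))
   exactly when S is a k-matching.  With at least n variables the coefficients at these partitions
   are unique by triangularity: the monomial x_0^2 ... x_(k-1)^2 x_k ... x_(n-k-1)
   occurs in p_(2^k, 1^(n-2k)), and among the other p_mu only in those of shape
   (2^j, 1^(n-2j)) with j < k, which allows induction on k. *)

From HB Require Import structures.
From mathcomp Require Import all_boot all_order all_algebra.
From mathcomp Require Import mpoly.
From mathcomp Require Import zify.
Set Implicit Arguments. Unset Strict Implicit. Unset Printing Implicit Defensive.
Import Order.TTheory GRing.Theory Num.Theory.
Local Open Scope ring_scope.

Lemma sumr_neq0_exists (V : nmodType) (I : finType) (P : pred I) (F : I -> V) :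
  \sum_(i | P i) F i != 0 -> exists2 i, P i & F i != 0.
Proof.
have [/existsP [i /andP [Pi Fi]] | /existsPn PF0 /eqP []] := boolP [exists i, P i && (F i != 0)].
  by exists i.
by rewrite big1 // => i Pi; apply/eqP; have := PF0 i; rewrite Pi negbK.
Qed.

Section MonomialCoefficients.
Variable N : nat.

Lemma mcoeff_sum_neq0 (R : nzRingType) (I : finType) (F : I -> {mpoly R[N]}) m :
  (\sum_i F i)@_m != 0 -> exists i, (F i)@_m != 0.
Proof. by rewrite raddf_sum => /sumr_neq0_exists [i _ Fi]; exists i. Qed.

Lemma mcoeffM_neq0 (R : nzRingType) (p q : {mpoly R[N]}) m : (p * q)@_m != 0 ->
  exists b c, [/\ m = (b + c)%MM, p@_b != 0 & q@_c != 0].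
Proof.
rewrite mcoeffM => /sumr_neq0_exists [bc /eqP m_bc pq].
by exists bc.1, bc.2; split=> //; apply: contraNneq pq => ->; rewrite ?mul0r ?mulr0.
Qed.

Variable R : numDomainType.
Implicit Types p q : {mpoly R[N]}.

Definition coef_ge0 p := forall m, 0 <= p@_m.

Lemma coef_ge0M p q : coef_ge0 p -> coef_ge0 q -> coef_ge0 (p * q).
Proof. by move=> p0 q0 m; rewrite mcoeffM sumr_ge0 // => k _; rewrite mulr_ge0. Qed.

Lemma coef_ge0X p k : coef_ge0 p -> coef_ge0 (p ^+ k).
Proof.
move=> p0; elim: k => [|k IHk]; first by move=> m; rewrite expr0 mcoeff1 ler0n.
by rewrite exprS; apply: coef_ge0M.
Qed.

Lemma mcoeffM_ge p q (b c : 'X_{1..N}) : coef_ge0 p -> coef_ge0 q ->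
  p@_b * q@_c <= (p * q)@_(b + c).
Proof.
move=> p0 q0; pose r := q - q@_c *: 'X_[c].
have r0 : coef_ge0 r.
  move=> a; rewrite /r mcoeffB mcoeffZ mcoeffX.
  by case: eqP => [->|_]; rewrite ?mulr1 ?subrr // mulr0 subr0.
have -> : p * q = q@_c *: (p * 'X_[c]) + p * r.
  by rewrite /r mulrDr mulrN scalerAr addrC subrK.
by rewrite mcoeffD mcoeffZ (addmC b c) mcoeffMX mulrC lerDl; apply: coef_ge0M.
Qed.

End MonomialCoefficients.

Section BigOrdinalValue.
Variables (R : Type) (idx : R) (op : Monoid.com_law idx) (n : nat).

Lemma big_ord_val (F : 'I_n.+1 -> R) (k : nat) :
  \big[op/idx]_(i | val i == k) F i = if (k <= n)%N then F (inord k) else idx.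
Proof.
case: leqP => kn.
  rewrite (big_pred1 (inord k)) // => i /=.
  by rewrite -(inj_eq val_inj) /= inordK // ltnS.
by rewrite big_pred0 // => i /=; apply: contraTF kn => /eqP <-; rewrite -leqNgt -ltnS.
Qed.

Lemma big_ord_12 (F : 'I_n.+1 -> R) :
  (forall i : 'I_n.+1, val i != 1%N -> val i != 2%N -> F i = idx) ->
  \big[op/idx]_i F i =
  op (\big[op/idx]_(i | val i == 1%N) F i) (\big[op/idx]_(i | val i == 2%N) F i).
Proof.
move=> F0; rewrite [in RHS]big_mkcond [X in op _ X]big_mkcond -big_split /=.
apply: eq_bigr => i _; have [-> | i1] := eqVneq (val i) 1%N; first by rewrite Monoid.mulm1.
by case: ifP => i2; rewrite Monoid.mul1m // F0 ?i2.
Qed.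

End BigOrdinalValue.

Lemma lam21E n k (i : 'I_n.+1) : (2 * k <= n)%N ->
  val (lam21 n k i) = if val i == 1%N then (n - 2 * k)%N else if val i == 2%N then k else 0%N.
Proof.
move=> kn; rewrite ffunE /=.
by case: ifP => _; [|case: ifP => _ //]; rewrite inordK //; lia.
Qed.

Lemma lam21_partn n k : (2 * k <= n)%N -> is_partn (lam21 n k).
Proof.
move=> kn; rewrite /is_partn lam21E //= big_ord_12 => [|i i1 i2]; last first.
  by rewrite lam21E // (negbTE i1) (negbTE i2) muln0.
rewrite !big_ord_val; apply/eqP.
by case: (leqP 1 n) => n1; case: (leqP 2 n) => n2; rewrite ?lam21E //= ?inordK //=; lia.
Qed.

Lemma plam_lam21 N n k : (2 * k <= n)%N ->
  plam N (lam21 n k) = psum N 1 ^+ (n - 2 * k) * psum N 2 ^+ k.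
Proof.
move=> kn; rewrite /plam big_ord_12 => [|i i1 i2]; last first.
  by rewrite lam21E // (negbTE i1) (negbTE i2) expr0.
rewrite !big_ord_val.
case: (leqP 1 n) => n1; case: (leqP 2 n) => n2; rewrite ?lam21E //= ?inordK //=; try lia.
  have k0 : k = 0%N by lia.
  by rewrite k0 !expr0 !mulr1 subn0.
have [k0 n0] : k = 0%N /\ n = 0%N by lia.
by rewrite k0 n0 !expr0 mulr1.
Qed.

Section PowerSumSupport.
Variable N : nat.
Implicit Types p q : {mpoly rat[N]}.

Definition npairs (m : 'X_{1..N}) : nat := (\sum_(j < N) m j %/ 2)%N.

Lemma npairsD (m m' : 'X_{1..N}) : (npairs m + npairs m' <= npairs (m + m')%MM)%N.
Proof. by rewrite /npairs -big_split /=; apply: leq_sum => j _; rewrite mnmDE; lia. Qed.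

Definition support_bound p (c : nat) (b : bool) :=
  forall m, p@_m != 0 -> (c <= npairs m)%N /\ (b -> exists j, (3 <= m j)%N).

Lemma support_boundM p q c c' b b' : support_bound p c b -> support_bound q c' b' ->
  support_bound (p * q) (c + c') (b || b').
Proof.
move=> pB qB _ /mcoeffM_neq0 [m [m' [-> /pB [pc pb] /qB [qc qb]]]].
split; first by have := npairsD m m'; lia.
by case/orP => [/pb|/qb] [j ?]; exists j; rewrite mnmDE; lia.
Qed.

Lemma support_boundX p c b k : support_bound p c b ->
  support_bound (p ^+ k) (c * k) (b && (0 < k)%N).
Proof.
move=> pB; elim: k => [|k IHk].
  by rewrite expr0 muln0 andbF => m; rewrite mcoeff1; case: eqP.
rewrite exprS mulnS => m /(support_boundM pB IHk) [pc pb].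
by split=> // /andP [b_true _]; apply: pb; rewrite b_true.
Qed.

Lemma support_bound_psum i : support_bound (psum N i) (2 <= i)%N (3 <= i)%N.
Proof.
move=> m /mcoeff_sum_neq0 [j]; rewrite mcoeffXn pnatr_eq0 eqb0 negbK => /eqP <-.
have mj : ((U_(j) *+ i)%MM j = i)%N by rewrite mulmnE mnm1E eqxx mul1n.
split=> [|i3]; last by exists j; rewrite mj.
rewrite /npairs (bigD1 j) //= mj; case: (leqP 2 i) => //= i2.
have : (1 <= i %/ 2)%N by rewrite divn_gt0.
lia.
Qed.

Lemma support_bound_plam n (m : {ffun 'I_n.+1 -> 'I_n.+1}) :
  support_bound (plam N m) (\sum_(i < n.+1) (2 <= i) * m i)%N
    [exists i : 'I_n.+1, (3 <= i) && (0 < m i)]%N.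
Proof.
rewrite /plam -(big_orE xpredT); apply: (big_rec3 (fun p c b => support_bound p c b)).
  by move=> a; rewrite mcoeff1; case: eqP.
move=> i p c b _ pB.
exact: support_boundM (support_boundX (k := m i) (@support_bound_psum i)) pB.
Qed.

End PowerSumSupport.

Lemma sum_ord_ltn (M a : nat) : (\sum_(j < M) (j < a : nat))%N = minn M a.
Proof.
elim: M => [|M IHM]; first by rewrite big_ord0 min0n.
by rewrite big_ord_recr /= IHM; case: (leqP a M) => aM; lia.
Qed.

Lemma partn_le2_lam21 n (m : {ffun 'I_n.+1 -> 'I_n.+1}) : is_partn m ->
  (forall i : 'I_n.+1, (3 <= i)%N -> m i = 0%N :> nat) ->
  m = lam21 n (\sum_(i < n.+1) (2 <= i) * m i)%N.
Proof.
move=> /andP [/eqP m0 /eqP sum_m] m3.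
have m12 (F : 'I_n.+1 -> nat) : (forall i : 'I_n.+1, (3 <= i)%N -> F i = 0%N) -> F ord0 = 0%N ->
    (\sum_i F i = \sum_(i | val i == 1%N) F i + \sum_(i | val i == 2%N) F i)%N.
  move=> F3 F0; apply: big_ord_12 => i /= i1 i2.
  have [i3|i3] := leqP 3 i; first exact: F3.
  by have -> : i = ord0 by apply: val_inj => /=; lia.
pose M (k : nat) := (\sum_(i | val i == k) (m i : nat))%N.
have mE (i : 'I_n.+1) : (m i : nat) = M i by rewrite /M big_ord_val -ltnS ltn_ord inord_val.
set c := (\sum_(i < n.+1) _)%N.
have cE : c = M 2%N.
  rewrite /c m12 => [|i /m3 ->|]; rewrite ?muln0 // big1 => [|i /eqP -> //].
  by apply: eq_bigr => i /eqP ->; rewrite mul1n.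
have nE : n = (M 1%N + 2 * M 2%N)%N.
  rewrite -[in LHS]sum_m m12 => [|i /m3 ->|]; rewrite ?muln0 ?m0 // big_distrr /=.
  by congr (_ + _)%N; apply: eq_bigr => i /eqP ->; rewrite ?mul1n.
apply/ffunP => i; apply/val_inj; rewrite /= lam21E; last by lia.
have [i1|i1] := eqVneq (val i) 1%N; first by rewrite mE i1 nE cE; lia.
have [i2|i2] := eqVneq (val i) 2%N; first by rewrite mE i2 cE.
have [i3|i3] := leqP 3 i; first by rewrite m3.
by have -> : i = ord0 by apply: val_inj; move: i1 i2 => /= i1 i2; lia.
Qed.

Section PowerSumTriangularity.
Variables N n : nat.

Definition mono21 (a : nat) : 'X_{1..N} :=
  [multinom (if (j < a)%N then 2 else if (j < n - a)%N then 1 else 0)%N | j < N].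

Definition mblock (lo k d : nat) : 'X_{1..N} := [multinom (d * (lo <= j < lo + k))%N | j < N].

Lemma npairs_mono21 a : (npairs (mono21 a) <= a)%N.
Proof.
apply: (@leq_trans (\sum_(j < N) (j < a : nat))%N); last by rewrite sum_ord_ltn geq_minr.
by apply: leq_sum => j _; rewrite mnmE; case: ifP => // _; case: ifP.
Qed.

Lemma mono21_le2 a j : (mono21 a j <= 2)%N.
Proof. by rewrite mnmE; case: ifP => // _; case: ifP. Qed.

Lemma mono21_split a : (2 * a <= n)%N -> mono21 a = (mblock 0 a 2 + mblock a (n - 2 * a) 1)%MM.
Proof.
move=> an; apply/mnmP => j; rewrite mnmDE !mnmE.
case: (ltnP j a) => ja //; case: (ltnP j (n - a)) => jna /=.
  by have -> : (j < a + (n - 2 * a))%N by lia.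
by have -> : (j < a + (n - 2 * a))%N = false by lia.
Qed.

Lemma coef_ge0_psum d : coef_ge0 (psum N d).
Proof. by move=> m; rewrite raddf_sum sumr_ge0 // => j _; rewrite /= mcoeffXn ler0n. Qed.

Lemma mcoeff_psumXn d (j : 'I_N) : 1 <= (psum N d)@_(U_(j) *+ d).
Proof.
rewrite raddf_sum (bigD1 j) //= mcoeffXn eqxx lerDl.
by apply: sumr_ge0 => i _; rewrite mcoeffXn ler0n.
Qed.

Lemma mcoeff_psumX_mblock d lo k : (lo + k <= N)%N -> 0 < (psum N d ^+ k)@_(mblock lo k d).
Proof.
elim: k => [|k IHk] kN.
  have -> : mblock lo 0 d = 0%MM.
    apply/mnmP => j; rewrite mnmE mnm0E addn0.
    by rewrite (_ : (lo <= j < lo)%N = false) ?muln0 //; lia.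
  by rewrite expr0 mcoeff1 eqxx ltr01.
have loK : (lo + k < N)%N by lia.
have -> : mblock lo k.+1 d = (mblock lo k d + U_(Ordinal loK) *+ d)%MM.
  apply/mnmP => j; rewrite mnmDE !mnmE mulmnE mnm1E -(inj_eq val_inj) /=.
  by have [<-|jk] := eqVneq (lo + k)%N j; rewrite ?muln1 ?muln0; lia.
rewrite exprSr.
apply: lt_le_trans (mcoeffM_ge _ _ (coef_ge0X _ (coef_ge0_psum d)) (coef_ge0_psum d)).
by rewrite mulr_gt0 ?IHk 1?(lt_le_trans ltr01 (mcoeff_psumXn _ _)) //; lia.
Qed.

Hypothesis nN : (n <= N)%N.

Lemma mcoeff_plam_lam21_mono21 a : (2 * a <= n)%N -> 0 < (plam N (lam21 n a))@_(mono21 a).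
Proof.
move=> an; rewrite plam_lam21 // mulrC mono21_split //.
apply: lt_le_trans (mcoeffM_ge _ _ (coef_ge0X _ (coef_ge0_psum 2)) (coef_ge0X _ (coef_ge0_psum 1))).
by rewrite mulr_gt0 // mcoeff_psumX_mblock //; lia.
Qed.

Lemma mcoeff_plam_mono21 a (m : {ffun 'I_n.+1 -> 'I_n.+1}) : is_partn m ->
  (plam N m)@_(mono21 a) != 0 -> exists2 j, (j <= a)%N & m = lam21 n j.
Proof.
move=> mP /support_bound_plam [pairs has3].
have m3 (i : 'I_n.+1) : (3 <= i)%N -> m i = 0%N :> nat.
  move=> i3; apply/eqP; rewrite -leqn0 leqNgt; apply/negP => mi.
  have [|j] := has3; first by apply/existsP; exists i; rewrite i3 mi.
  by have := mono21_le2 a j; lia.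
exists (\sum_(i < n.+1) (2 <= i) * m i)%N; last exact: partn_le2_lam21.
exact: leq_trans pairs (npairs_mono21 a).
Qed.

Lemma coef_lam21_unique (c c' : {ffun 'I_n.+1 -> 'I_n.+1} -> rat) :
  \sum_(m | is_partn m) c m *: plam N m = \sum_(m | is_partn m) c' m *: plam N m ->
  forall a, (2 * a <= n)%N -> c (lam21 n a) = c' (lam21 n a).
Proof.
move=> E; have {}E : \sum_(m | is_partn m) (c m - c' m) *: plam N m = 0.
  rewrite (eq_bigr (fun m => c m *: plam N m - c' m *: plam N m)) => [|m _]; last exact: scalerBl.
  by rewrite sumrB E subrr.
(* the coefficient of x^(mono21 a) only sees lam21 n j for j <= a *)
elim/ltn_ind => a IHa an; have := congr1 (mcoeff (mono21 a)) E.
rewrite raddf_sum mcoeff0 /= (bigD1 (lam21 n a)) ?lam21_partn //= big1 => [|m /andP [mP ma]].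
  rewrite addr0 mcoeffZ => /eqP.
  by rewrite mulf_eq0 (gt_eqF (mcoeff_plam_lam21_mono21 an)) orbF subr_eq0 => /eqP.
rewrite mcoeffZ; have [->|] := eqVneq (plam N m)@_(mono21 a) 0; first by rewrite mulr0.
case/(mcoeff_plam_mono21 mP) => j ja mj.
have {}ja : (j < a)%N by rewrite ltn_neqAle ja andbT; apply: contra ma => /eqP <-; rewrite mj.
by rewrite mj IHa ?subrr ?mul0r //; lia.
Qed.

End PowerSumTriangularity.

Section EdgeSubsets.
Variable T : finType.
Implicit Types (S : {set {set T}}) (B : {set T}).

Definition edge_rel S : rel T := fun x y => [set x; y] \in S.

Lemma edge_rel_sym S : ssrbool.symmetric (edge_rel S).
Proof. by move=> x y; rewrite /edge_rel setUC. Qed.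

Lemma connect_edge_rel_equiv S : {in [set: T] & &, equivalence_rel (connect (edge_rel S))}.
Proof.
move=> x y z _ _ _; split=> [|xy]; first exact: connect0.
by apply/idP/idP; apply: connect_trans; rewrite // (sym_connect_sym (@edge_rel_sym S)).
Qed.

Definition comps S := equivalence_partition (connect (edge_rel S)) [set: T].

Lemma comps_partition S : partition (comps S) [set: T].
Proof. exact/equivalence_partitionP/connect_edge_rel_equiv. Qed.

Lemma comps_trivIset S : trivIset (comps S).
Proof. by case/and3P: (comps_partition S). Qed.

Lemma comps_cover S : cover (comps S) = [set: T].
Proof. by case/and3P: (comps_partition S) => /eqP. Qed.

Lemma mem_pblock_comps S x y : (y \in pblock (comps S) x) = connect (edge_rel S) x y.
Proof. exact/pblock_equivalence_partition/in_setT/in_setT/connect_edge_rel_equiv. Qed.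

Lemma pblock_comps S x : pblock (comps S) x \in comps S.
Proof. by rewrite pblock_mem // comps_cover inE. Qed.

Lemma comps_pblock_self S x : x \in pblock (comps S) x.
Proof. by rewrite mem_pblock comps_cover inE. Qed.

Lemma comps_nonempty S B : B \in comps S -> exists x, x \in B.
Proof.
move=> SB; have /set0Pn [x Bx] : B != set0.
  by case/and3P: (comps_partition S) => _ _; apply: contraNneq => <-.
by exists x.
Qed.

Lemma card_comps_gt0 S B : B \in comps S -> (0 < #|B|)%N.
Proof. by case/comps_nonempty => x Bx; apply/card_gt0P; exists x. Qed.

Lemma card_comps_le S : (#|comps S| <= #|T|)%N.
Proof.
rewrite -cardsT (card_partition (comps_partition S)) -sum1_card.
by apply: leq_sum => B /card_comps_gt0.
Qed.

Definition const_on_edges N S (k : {ffun T -> 'I_N}) :=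
  [forall x, forall y, edge_rel S x y ==> (k x == k y)].

Lemma const_on_connect N S (k : {ffun T -> 'I_N}) x y :
  const_on_edges S k -> connect (edge_rel S) x y -> k x = k y.
Proof.
move=> /forallP kS /connectP [p + ->]; elim: p x => [|z p IHp] x //= /andP [xz zp].
by rewrite -(IHp z zp); apply/eqP; move/forallP/(_ z)/implyP: (kS x); apply.
Qed.

Definition comp_type S : {ffun 'I_#|T|.+1 -> 'I_#|T|.+1} :=
  [ffun i : 'I_#|T|.+1 => inord #|[set B in comps S | #|B| == i]|].

Lemma comp_typeE S (i : 'I_#|T|.+1) : val (comp_type S i) = #|[set B in comps S | #|B| == i]|.
Proof.
rewrite ffunE /= inordK // ltnS; apply: leq_trans (card_comps_le S).
by apply: subset_leq_card; apply/subsetP => B; rewrite inE => /andP [].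
Qed.

Lemma card_comps_eq S i :
  #|[set B in comps S | #|B| == i]| = (\sum_(B in comps S) (#|B| == i : nat))%N.
Proof.
rewrite -sum1_card [RHS]big_mkcond [LHS]big_mkcond /=; apply: eq_bigr => B _.
by rewrite inE; case: (B \in comps S); case: (#|B| == i).
Qed.

Lemma card_inord_eq (B : {set T}) (i : 'I_#|T|.+1) : (inord #|B| == i) = (#|B| == i).
Proof. by rewrite -(inj_eq val_inj) /= inordK // ltnS max_card. Qed.

Lemma comp_type_partn S : is_partn (comp_type S).
Proof.
apply/andP; split.
  by rewrite comp_typeE card_comps_eq big1 // => B /card_comps_gt0; case: #|B|.
rewrite -[X in _ == X]cardsT (card_partition (comps_partition S)).
rewrite (partition_big (fun B => inord #|B| : 'I_#|T|.+1) predT) //=; apply/eqP/eq_bigr => i _.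
rewrite comp_typeE card_comps_eq big_distrr /= big_mkcondr /=.
by apply: eq_bigr => B _; rewrite card_inord_eq; case: eqP => [->|]; rewrite ?muln1 ?muln0.
Qed.

Lemma plam_comp_type N S : plam N (comp_type S) = \prod_(B in comps S) psum N #|B|.
Proof.
rewrite [RHS](partition_big (fun B => inord #|B| : 'I_#|T|.+1) predT) //=.
apply: eq_bigr => i _; rewrite (eq_bigr (fun _ => psum N i)) => [|B /andP [_]]; last first.
  by rewrite card_inord_eq => /eqP ->.
rewrite prodr_const comp_typeE; congr (_ ^+ _); apply: eq_card => B.
by rewrite inE [in RHS]unfold_in /= card_inord_eq.
Qed.

Section ColoringsConstantOnComponents.
Variables (N : nat) (j0 : 'I_N) (S : {set {set T}}).
Local Notation P := (comps S).

Lemma pick_comps B : B \in P -> exists2 x, [pick x in B] = Some x & x \in B.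
Proof.
move=> PB; case: pickP => [x Bx|B0]; first by exists x.
by have [x Bx] := comps_nonempty PB; move: (B0 x); rewrite Bx.
Qed.

Local Notation comp_family := (pfamily j0 (fun B => B \in P) (fun _ _ => true)).

Definition comp_colouring (k : {ffun T -> 'I_N}) : {ffun {set T} -> 'I_N} :=
  [ffun B => if B \in P then (if [pick x in B] is Some x then k x else j0) else j0].

Definition vertex_colouring (f : {ffun {set T} -> 'I_N}) : {ffun T -> 'I_N} :=
  [ffun v => f (pblock P v)].

Lemma vertex_colouringK : {in comp_family, cancel vertex_colouring comp_colouring}.
Proof.
move=> f /pfamilyP [/subsetP f_supp _]; apply/ffunP => B; rewrite !ffunE.
case: ifP => PB.
  by have [x -> Bx] := pick_comps PB; rewrite ffunE (def_pblock (comps_trivIset S) PB Bx).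
by apply/eqP; apply: contraFT PB => fB; apply: f_supp; rewrite /support inE eq_sym.
Qed.

Lemma comp_colouring_onto k :
  (comp_colouring k \in comp_family) && (vertex_colouring (comp_colouring k) == k) =
  const_on_edges S k.
Proof.
have -> : comp_colouring k \in comp_family.
  apply/pfamilyP; split=> //; apply/subsetP => B; rewrite inE ffunE.
  by case: (B \in P); rewrite ?eqxx.
apply/eqP/idP => [kK|kS].
  apply/forallP => x; apply/forallP => y; apply/implyP => xy.
  have yx : y \in pblock P x by rewrite mem_pblock_comps connect1.
  by rewrite -kK !ffunE (same_pblock (comps_trivIset S) yx).
apply/ffunP => v; rewrite !ffunE pblock_comps.
have [x -> Bx] := pick_comps (pblock_comps S v).
apply: (const_on_connect kS); rewrite -mem_pblock_comps.
by rewrite (same_pblock (comps_trivIset S) Bx) comps_pblock_self.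
Qed.

Lemma prod_comps_psum_family :
  \prod_(B in P) psum N #|B| = \sum_(f in comp_family) \prod_v 'X_(vertex_colouring f v).
Proof.
rewrite (eq_bigr (fun B => \sum_(j < N) \prod_(v in B) ('X_j : {mpoly rat[N]}))) => [|B _];
  last by apply: eq_bigr => j _; rewrite prodr_const.
rewrite (big_distr_big_dep j0 (fun B => B \in P) (fun _ _ => true)) /=; apply: eq_bigr => f _.
rewrite -(eq_bigl _ _ (fun v => in_setT v)) -(comps_cover S) big_trivIset ?comps_trivIset //.
apply: eq_bigr => B PB; apply: eq_bigr => v Bv.
by rewrite ffunE (def_pblock (comps_trivIset S) PB Bv).
Qed.

(* A choice of one colour per component is exactly a colouring constant on the edges of S. *)
Lemma prod_comps_psum :
  \prod_(B in P) psum N #|B| = \sum_(k : {ffun T -> 'I_N} | const_on_edges S k) \prod_v 'X_(k v).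
Proof.
rewrite prod_comps_psum_family (reindex_onto comp_colouring vertex_colouring vertex_colouringK).
apply: eq_big => [k|k /andP [_ /eqP ->] //]; exact: comp_colouring_onto.
Qed.

End ColoringsConstantOnComponents.

Lemma sum_const_on_edges N S : (#|T| <= N)%N ->
  \sum_(k : {ffun T -> 'I_N} | const_on_edges S k) \prod_v 'X_(k v) = plam N (comp_type S).
Proof.
move=> TN; rewrite plam_comp_type; case: (posnP N) => [N0|N_gt0]; last first.
  by rewrite (prod_comps_psum (Ordinal N_gt0)).
have T_0 : #|T| = 0%N by lia.
have T0 (v : T) : False by have := card0_eq T_0 v.
rewrite big_pred0 => [|B]; last by apply/negbTE/negP => /comps_nonempty [v]; case: (T0 v).
rewrite (eq_bigl predT) => [|k]; last by apply/forallP => v; case: (T0 v).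
rewrite (eq_bigr (fun _ => 1)) => [|k _]; last by rewrite big1 // => v; case: (T0 v).
by rewrite sumr_const card_ffun card_ord N0 T_0.
Qed.

End EdgeSubsets.

Lemma sum_subsets_sign (R : numDomainType) (A : finType) (M : {set A}) :
  \sum_(S : {set A} | S \subset M) (-1) ^+ #|S| = (M == set0)%:R :> R.
Proof.
have [->|/set0Pn [x Mx]] := eqVneq M set0.
  by rewrite (big_pred1 set0) ?cards0 // => S; rewrite subset0.
pose t (S : {set A}) := if x \in S then S :\ x else x |: S.
have tK : involutive t.
  by move=> S; rewrite /t; case: (boolP (x \in S)) => Sx; rewrite ?setD11 ?setD1K ?setU11 ?setU1K.
set s := (\sum_(S | _) _).
suff : s *+ 2 == 0 by rewrite mulrn_eq0 => /eqP ->.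
(* the involution toggling x flips the sign of every term *)
have s_opp : s = - s.
  rewrite {2}/s (reindex_inj (inv_inj tK)) /= -sumrN; apply: eq_big => S.
    rewrite /t; case: (boolP (x \in S)) => Sx; last by rewrite subUset sub1set Mx.
    apply/idP/idP => SM; first exact: subset_trans (subD1set S x) SM.
    by rewrite -(setD1K Sx) subUset sub1set Mx.
  move=> _; rewrite /t; case: (boolP (x \in S)) => Sx.
    by rewrite [in LHS](cardsD1 x S) Sx exprS mulN1r.
  by rewrite cardsU1 Sx exprS mulN1r opprK.
by rewrite mulr2n {2}s_opp addrN.
Qed.

Section StanleyExpansion.
Variables (T : finType) (e : rel T).
Hypothesis e_irr : irreflexive e.

Definition edge_set : {set {set T}} := [set s | is_edge e s].

Lemma is_edgeP s : is_edge e s -> exists x y, [/\ e x y, x != y & s = [set x; y]].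
Proof.
case/existsP => x /existsP [y /andP [xy /eqP ->]]; exists x, y; split=> //.
by apply: contraTneq xy => ->; rewrite e_irr.
Qed.

Lemma is_edge2_neq x y : is_edge e [set x; y] -> x != y.
Proof.
case/is_edgeP => a [b [_ ab xy_ab]]; apply/eqP => xy.
by move: (cards2 a b); rewrite -xy_ab xy setUid cards1 ab.
Qed.

Lemma is_edge2 x y : e x y -> is_edge e [set x; y].
Proof. by move=> xy; apply/existsP; exists x; apply/existsP; exists y; rewrite xy eqxx. Qed.

Definition monochrome N (k : {ffun T -> 'I_N}) (s : {set T}) :=
  [forall u in s, forall v in s, k u == k v].

Definition monochrome_edges N (k : {ffun T -> 'I_N}) := [set s in edge_set | monochrome k s].

Lemma monochrome2 N (k : {ffun T -> 'I_N}) x y : monochrome k [set x; y] = (k x == k y).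
Proof.
apply/forall_inP/eqP => [kxy|kxy u].
  by move/forall_inP: (kxy x (set21 x y)) => /(_ y (set22 x y)) /eqP.
rewrite !inE => /orP [] /eqP ->; apply/forall_inP => v; rewrite !inE => /orP [] /eqP ->;
  by rewrite ?kxy.
Qed.

Lemma const_on_edgesE N (S : {set {set T}}) (k : {ffun T -> 'I_N}) :
  S \subset edge_set -> const_on_edges S k = (S \subset monochrome_edges k).
Proof.
move/subsetP => SE; apply/idP/subsetP => [kS s Ss|kS].
  have := SE s Ss; rewrite inE => /is_edgeP [x [y [_ _ sxy]]].
  rewrite inE SE //= sxy monochrome2; apply/eqP/(const_on_connect kS)/connect1.
  by rewrite /edge_rel -sxy.
apply/forallP => x; apply/forallP => y; apply/implyP => /kS.
by rewrite inE monochrome2 => /andP [].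
Qed.

Lemma proper_colE N (k : {ffun T -> 'I_N}) : proper_col e k = (monochrome_edges k == set0).
Proof.
apply/forallP/eqP => [kP|k0 x].
  apply/setP => s; rewrite !inE; apply/negbTE/andP => [[/is_edgeP [x [y [xy _ ->]]]]].
  by rewrite monochrome2; apply/negP; move/forallP/(_ y)/implyP: (kP x); apply.
apply/forallP => y; apply/implyP => xy; apply: contraT; rewrite negbK => kxy.
by have := in_set0 [set x; y]; rewrite -k0 !inE is_edge2 // monochrome2 kxy.
Qed.

Lemma chromsym_edge_subsets N :
  chromsym e N = \sum_(S : {set {set T}} | S \subset edge_set) (-1) ^+ #|S| *:
     \sum_(k : {ffun T -> 'I_N} | const_on_edges S k) \prod_v 'X_(k v).
Proof.
under [RHS]eq_bigr => S _ do rewrite scaler_sumr big_mkcond /=.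
rewrite exchange_big /= [LHS]big_mkcond /=; apply: eq_bigr => k _.
rewrite -big_mkcondr /= -scaler_suml.
rewrite (eq_bigl (fun S : {set {set T}} => S \subset monochrome_edges k)) => [|S]; last first.
  case: (boolP (S \subset edge_set)) => SE /=; first by rewrite const_on_edgesE.
  apply/esym/negbTE; apply: contra SE => /subset_trans; apply.
  by apply/subsetP => s; rewrite inE => /andP [].
by rewrite sum_subsets_sign -proper_colE; case: (proper_col e k); rewrite ?scale1r ?scale0r.
Qed.

Definition stanley_coef (m : {ffun 'I_#|T|.+1 -> 'I_#|T|.+1}) : rat :=
  \sum_(S : {set {set T}} | S \subset edge_set) (comp_type S == m)%:R * (-1) ^+ #|S|.

Lemma pexpansion_stanley_coef N : (#|T| <= N)%N -> pexpansion e N stanley_coef.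
Proof.
move=> TN; rewrite /pexpansion chromsym_edge_subsets.
under eq_bigr => S _ do rewrite sum_const_on_edges //.
under [RHS]eq_bigr => m _ do rewrite scaler_suml.
rewrite exchange_big /=; apply: eq_bigr => S _.
rewrite (bigD1 (comp_type S)) ?comp_type_partn //= eqxx mul1r big1 ?addr0 // => m /andP [_ mS].
by rewrite eq_sym (negbTE mS) mul0r scale0r.
Qed.

End StanleyExpansion.

Section Matchings.
Variables (T : finType) (e : rel T).
Hypothesis e_irr : irreflexive e.
Implicit Types (S M : {set {set T}}) (B : {set T}).

Lemma is_matchingP M : is_matching e M ->
  (forall s, s \in M -> is_edge e s) /\
  (forall s t, s \in M -> t \in M -> s != t -> [disjoint s & t]).
Proof.
case/andP => /forall_inP ME /forall_inP Mdisj; split=> // s t Ms Mt.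
by move/forallP/(_ t)/implyP: (Mdisj s Ms) => /(_ Mt) /implyP.
Qed.

Lemma matching_sub_edge_set M : is_matching e M -> M \subset edge_set e.
Proof. by case/is_matchingP => ME _; apply/subsetP => s Ms; rewrite inE ME. Qed.

Lemma matching_edge_rel_eq M x y z :
  is_matching e M -> edge_rel M x y -> edge_rel M y z -> x = z.
Proof.
move=> /is_matchingP [ME Mdisj] xy yz; have [xy_yz|] := eqVneq [set x; y] [set y; z].
  have : x \in [set y; z] by rewrite -xy_yz set21.
  rewrite !inE => /orP [/eqP xy_eq|/eqP //].
  by move: (is_edge2_neq e_irr (ME _ xy)); rewrite xy_eq eqxx.
move/(Mdisj _ _ xy yz)/disjointFr/(_ (set22 x y)).
by rewrite !inE eqxx.
Qed.

Lemma matching_connect M x y : is_matching e M ->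
  connect (edge_rel M) x y -> x = y \/ edge_rel M x y.
Proof.
move=> Mm /connectP [p + ->]; elim: p x => [|w p IHp] x /=; first by left.
case/andP => xw /IHp [<-|wy]; first by right.
by left; apply: matching_edge_rel_eq Mm xw wy.
Qed.

Lemma matching_comps_le2 M B : is_matching e M -> B \in comps M -> (#|B| <= 2)%N.
Proof.
move=> Mm MB; have [x Bx] := comps_nonempty MB.
have BxE : B = pblock (comps M) x by rewrite (def_pblock (comps_trivIset M) MB Bx).
have Bnbr u : u \in B -> u = x \/ edge_rel M x u.
  by rewrite BxE mem_pblock_comps => /(matching_connect Mm) [<-|]; [left|right].
have [w /andP [Bw wx] | Bx1] := pickP [pred w | (w \in B) && (w != x)].
  have xw : edge_rel M x w by case: (Bnbr w Bw) => // wx_eq; rewrite wx_eq eqxx in wx.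
  apply: (@leq_trans #|[set x; w]|); last by rewrite cards2; case: (x != w).
  apply/subset_leq_card/subsetP => u /Bnbr [->|xu]; first by rewrite set21.
  by rewrite (matching_edge_rel_eq Mm (_ : edge_rel M u x) xw) ?set22 // edge_rel_sym.
apply: (@leq_trans #|[set x]|); last by rewrite cards1.
apply/subset_leq_card/subsetP => u Bu; rewrite inE; apply: contraT => ux.
by move: (Bx1 u); rewrite /= Bu ux.
Qed.

Lemma edges_comps2 S : S \subset edge_set e -> (forall B, B \in comps S -> (#|B| <= 2)%N) ->
  S = [set B in comps S | #|B| == 2].
Proof.
move=> /subsetP SE S_le2; apply/setP => s; rewrite inE; apply/idP/andP => [Ss|[SB]].
  have := SE s Ss; rewrite inE => /(is_edgeP e_irr) [x [y [_ xy sxy]]].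
  have s_sub : s \subset pblock (comps S) x.
    apply/subsetP => u; rewrite sxy !inE => /orP [] /eqP ->; rewrite ?comps_pblock_self //.
    by rewrite mem_pblock_comps connect1 // /edge_rel -sxy.
  have s2 : #|s| = 2%N by rewrite sxy cards2 xy.
  have /eqP sE : s == pblock (comps S) x by rewrite eqEcard s_sub s2 S_le2 ?pblock_comps.
  by split; [rewrite sE pblock_comps | rewrite s2].
case/cards2P => x [y [xy sxy]].
have sx : x \in s by rewrite sxy set21.
have sxE : pblock (comps S) x = s by apply: def_pblock (comps_trivIset S) SB sx.
have : connect (edge_rel S) x y by rewrite -mem_pblock_comps sxE sxy set22.
case/connectP => -[|z p] /=; first by move=> _ yx; rewrite yx eqxx in xy.
case/andP => xz _ _; have : z \in s by rewrite -sxE mem_pblock_comps connect1.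
rewrite sxy !inE => /orP [] /eqP zE; last by rewrite -zE.
by have := SE _ xz; rewrite inE zE => /(is_edge2_neq e_irr); rewrite eqxx.
Qed.

Lemma card_comps12 S : (forall B, B \in comps S -> (#|B| <= 2)%N) ->
  #|T| = (#|[set B in comps S | #|B| == 1%N]| + 2 * #|[set B in comps S | #|B| == 2]|)%N.
Proof.
move=> S_le2; rewrite -cardsT (card_partition (comps_partition S)) !card_comps_eq.
rewrite big_distrr -big_split /=; apply: eq_bigr => B SB.
by move: (S_le2 B SB) (card_comps_gt0 SB); case: #|B| => [|[|[|]]].
Qed.

Lemma comp_type_comps_le2 S : S \subset edge_set e ->
  (forall B, B \in comps S -> (#|B| <= 2)%N) -> comp_type S = lam21 #|T| #|S|.
Proof.
move=> SE S_le2; have SE2 := edges_comps2 SE S_le2.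
have nE := card_comps12 S_le2; rewrite -SE2 in nE.
apply/ffunP => i; apply/val_inj; rewrite comp_typeE lam21E ?nE ?leq_addl //.
have [i1|i1] := eqVneq (val i) 1%N; first by rewrite i1 nE addnK.
have [i2|i2] := eqVneq (val i) 2%N; first by rewrite i2 -SE2.
apply/eqP; rewrite cards_eq0; apply/eqP/setP => B; rewrite !inE.
apply/negbTE/andP => -[SB /eqP Bi]; move: (S_le2 B SB) (card_comps_gt0 SB) i1 i2 => /=.
by rewrite Bi; case: (nat_of_ord i) => [|[|[|]]].
Qed.

Lemma matching_comps_le2_edges S : S \subset edge_set e ->
  (forall B, B \in comps S -> (#|B| <= 2)%N) -> is_matching e S.
Proof.
move=> SE S_le2; apply/andP; split; first by apply/forall_inP => s /(subsetP SE); rewrite inE.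
apply/forall_inP => s Ss; apply/forall_inP => t St; apply/implyP.
move: Ss St; rewrite (edges_comps2 SE S_le2) !inE => /andP [Ss _] /andP [St _].
exact: (trivIsetP (comps_trivIset S)).
Qed.

Lemma comp_type_lam21_le2 S a : (2 * a <= #|T|)%N -> comp_type S = lam21 #|T| a ->
  forall B, B \in comps S -> (#|B| <= 2)%N.
Proof.
move=> aT Sa B SB; rewrite leqNgt; apply/negP => B3.
have B_lt : (#|B| < #|T|.+1)%N by rewrite ltnS max_card.
have := comp_typeE S (Ordinal B_lt); rewrite Sa lam21E //= !ifN_eq; try lia.
by move/esym/eqP; rewrite cards_eq0 => /eqP/setP/(_ B); rewrite !inE SB eqxx.
Qed.

Lemma lam21_inj n a b : (2 * a <= n)%N -> (2 * b <= n)%N -> lam21 n a = lam21 n b -> a = b.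
Proof.
move=> an bn ab; have [n2|n_lt2] := leqP 2 n; last by lia.
have n2' : (2 < n.+1)%N by lia.
have := congr1 (fun m : {ffun 'I_n.+1 -> 'I_n.+1} => val (m (Ordinal n2'))) ab.
by rewrite /= !lam21E.
Qed.

Lemma comp_type_lam21 S a : S \subset edge_set e -> (2 * a <= #|T|)%N ->
  (comp_type S == lam21 #|T| a) = is_matching e S && (#|S| == a).
Proof.
move=> SE aT; apply/eqP/andP => [Sa | [Sm /eqP <-]]; last first.
  by apply: comp_type_comps_le2 => // B; apply: matching_comps_le2.
have S_le2 := comp_type_lam21_le2 aT Sa.
split; first exact: matching_comps_le2_edges.
apply/eqP/(lam21_inj _ aT); last by rewrite -Sa comp_type_comps_le2.
by rewrite [X in (_ <= X)%N](card_comps12 S_le2) -(edges_comps2 SE S_le2) leq_addl.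
Qed.

Lemma stanley_coef_lam21 a : (2 * a <= #|T|)%N ->
  stanley_coef e (lam21 #|T| a) = (-1) ^+ a * (nmatch e a)%:R.
Proof.
move=> aT; rewrite /stanley_coef /nmatch -sum1_card natr_sum mulr_sumr big_mkcond [RHS]big_mkcond.
apply: eq_bigr => S _; rewrite inE mulr1.
have [SE|SnE] := boolP (S \subset edge_set e).
  by rewrite comp_type_lam21 //; case: andP => [[_ /eqP ->]|_]; rewrite ?mul1r ?mul0r.
by case: ifP => // /andP [/matching_sub_edge_set SE _]; rewrite SE in SnE.
Qed.

Lemma nmatch_eq0 a : (#|T| < 2 * a)%N -> nmatch e a = 0%N.
Proof.
move=> Ta; apply/eqP; rewrite cards_eq0; apply/eqP/setP => M; rewrite !inE.
apply/negbTE/andP => -[/is_matchingP [ME Mdisj] /eqP Ma].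
have Mtriv : trivIset M by apply/trivIsetP => s t; apply: Mdisj.
have cover_card : #|cover M| = (#|M| * 2)%N.
  have [_] := leq_card_cover M; rewrite Mtriv => /eqP ->; rewrite -sum_nat_const.
  by apply: eq_bigr => s /ME /(is_edgeP e_irr) [x [y [_ xy ->]]]; rewrite cards2 xy.
by have := max_card (cover M); rewrite cover_card Ma; lia.
Qed.

End Matchings.

Theorem theorem1 (T : finType) (e : rel T)
  (e_sym : ssrbool.symmetric e) (e_irr : irreflexive e) (e_forest : forest e)
  (N : nat) (HN : (#|T| <= N)%N) :
  (exists c, pexpansion e N c) /\
  (forall c, pexpansion e N c ->
     (forall k : nat, (2 * k <= #|T|)%N ->
        c (lam21 #|T| k) = (-1) ^+ k * (nmatch e k)%:R) /\
     matching_poly e =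
       \sum_(k < #|T|.+1 | (2 * k <= #|T|)%N) `|c (lam21 #|T| k)| *: 'X^k).
Proof.
split; first by exists (stanley_coef e); apply: pexpansion_stanley_coef.
move=> c Xc.
have c_lam21 k : (2 * k <= #|T|)%N -> c (lam21 #|T| k) = (-1) ^+ k * (nmatch e k)%:R.
  move=> kT; rewrite -(stanley_coef_lam21 e_irr kT); apply: (coef_lam21_unique HN) kT.
  by rewrite -Xc -(pexpansion_stanley_coef e_irr HN).
split=> //; rewrite /matching_poly [RHS]big_mkcond /=; apply: eq_bigr => k _.
have [kT|Tk] := leqP (2 * k) #|T|; last by rewrite nmatch_eq0 // scale0r.
by rewrite c_lam21 // normrM normrX normrN1 expr1n mul1r normr_nat.
Qed.
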